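(* Let $\epsilon_1, \epsilon_2, c \in (0, 1)$. Suppose that a maximization problem admits a polynomial-time $c$-approximation algorithm and a $(1 - \epsilon_1, \epsilon_2)$-APPA $(\mathcal{A}, \mathcal{B})$. Then it admits a $(1 - \epsilon_1 - \epsilon_2 / c)$-APPA whose reduction algorithm is $\mathcal{A}$.
   Context: For a parameterized maximization problem with instances $(I,k)$ and optimum value $\mathrm{OPT}(I,k)$, a solution is $\beta$-approximate if its value is at least $\beta \cdot \mathrm{OPT}(I,k)$. An $\alpha$-APPA (approximate polynomial-time pre-processing algorithm) is a pair of polynomial-time algorithms $(\mathcal{A}, \mathcal{B})$ (reduction and solution-lifting algorithm): given an instance $(I, k)$, $\mathcal{A}$ outputs an instance $(I', k')$ of the same problem, and given any $\beta$-approximate solution of $(I', k')$, $\mathcal{B}$ outputs an $\alpha\beta$-approximate solution of $(I, k)$. An $(\alpha, \gamma)$-APPA is defined identically except that $\mathcal{B}$ is only required to output an $(\alpha\beta - \gamma)$-approximate solution of $(I,k)$, i.e. one of value at least $(\alpha\beta-\gamma)\mathrm{OPT}(I,k)$. A $c$-approximation algorithm outputs a $c$-approximate solution. *)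

From Stdlib Require Import Reals.
Open Scope R_scope.

(* An abstract model of "polynomial-time computable functions": a class of
   functions between types, closed under the usual structural operations
   (identity, composition, pairing, projections). *)
Record CompModel := {
  ptime : forall (A B : Type), (A -> B) -> Prop;
  ptime_id : forall A, ptime A A (fun x => x);
  ptime_comp : forall A B C (f : A -> B) (g : B -> C),
      ptime A B f -> ptime B C g -> ptime A C (fun x => g (f x));
  ptime_pair : forall A B C (f : A -> B) (g : A -> C),
      ptime A B f -> ptime A C g -> ptime A (B * C)%type (fun x => (f x, g x));
  ptime_fst : forall A B, ptime (A * B)%type A fst;
  ptime_snd : forall A B, ptime (A * B)%type B snd
}.

(* A parameterized maximization problem: instances are pairs (I, k) of a raw
   instance and a parameter; solutions, feasibility, a nonnegative objective
   value, and OPT = the supremum of the values of feasible solutions.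
   As for NPO problems, the objective is polynomial-time computable, which we
   express by: choosing the better of two given solutions is polynomial-time. *)
Record MaxProblem (M : CompModel) := {
  raw : Type;
  sol : Type;
  feasible : (raw * nat)%type -> sol -> Prop;
  value : (raw * nat)%type -> sol -> R;
  value_nonneg : forall x s, feasible x s -> 0 <= value x s;
  opt : (raw * nat)%type -> R;
  opt_nonneg : forall x, 0 <= opt x;
  opt_upper : forall x s, feasible x s -> value x s <= opt x;
  opt_least : forall x r, 0 <= r -> (forall s, feasible x s -> value x s <= r) ->
      opt x <= r;
  ptime_better : ptime M ((raw * nat) * (sol * sol))%type sol
      (fun p => if Rle_dec (value (fst p) (fst (snd p))) (value (fst p) (snd (snd p)))
                then snd (snd p) else fst (snd p))
}.

Arguments raw {M}.
Arguments sol {M}.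
Arguments feasible {M}.
Arguments value {M}.
Arguments opt {M}.

Definition Inst {M : CompModel} (P : MaxProblem M) : Type := (raw P * nat)%type.

Definition approx {M : CompModel} (P : MaxProblem M) (beta : R)
    (x : Inst P) (s : sol P) : Prop :=
  feasible P x s /\ value P x s >= beta * opt P x.

Definition c_approx_alg {M : CompModel} (P : MaxProblem M) (c : R)
    (C : Inst P -> sol P) : Prop :=
  ptime M (Inst P) (sol P) C /\
  forall x, (exists s, feasible P x s) -> approx P c x (C x).

(* (alpha, gamma)-APPA: reduction A, solution lifting B (which receives the
   original instance and a solution of the reduced instance A x). *)
Definition appa_gamma {M : CompModel} (P : MaxProblem M) (alpha gamma : R)
    (A : Inst P -> Inst P) (B : Inst P -> sol P -> sol P) : Prop :=
  ptime M (Inst P) (Inst P) A /\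
  ptime M (Inst P * sol P)%type (sol P) (fun p => B (fst p) (snd p)) /\
  forall (x : Inst P) (beta : R) (s' : sol P),
    0 <= beta <= 1 -> approx P beta (A x) s' ->
    approx P (alpha * beta - gamma) x (B x s').

Definition appa {M : CompModel} (P : MaxProblem M) (alpha : R)
    (A : Inst P -> Inst P) (B : Inst P -> sol P -> sol P) : Prop :=
  ptime M (Inst P) (Inst P) A /\
  ptime M (Inst P * sol P)%type (sol P) (fun p => B (fst p) (snd p)) /\
  forall (x : Inst P) (beta : R) (s' : sol P),
    0 <= beta <= 1 -> approx P beta (A x) s' ->
    approx P (alpha * beta) x (B x s').

From Stdlib Require Import Reals Lra.
Open Scope R_scope.

(* Keep the better of B's lifted solution and the c-approximate solution of the
   original instance.  If beta >= c, the additive loss gamma of B is at most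
   (gamma / c) * beta, so B's solution is already (alpha - gamma / c) * beta-approximate;
   if beta < c, the c-approximation alone beats (alpha - gamma / c) * beta. *)

Lemma scaled_ratio_le_max (alpha gamma c beta : R) :
  alpha <= 1 -> 0 <= gamma -> 0 < c -> 0 <= beta ->
  (alpha - gamma / c) * beta <= c \/
  (alpha - gamma / c) * beta <= alpha * beta - gamma.
Proof.
  intros Halpha Hgamma Hc Hbeta.
  assert (Hq : 0 <= gamma / c)
    by (unfold Rdiv; apply Rmult_le_pos; [| left; apply Rinv_0_lt_compat]; lra).
  destruct (Rlt_le_dec beta c) as [Hlt | Hge]; [left; nra | right].
  assert (gamma / c * beta - gamma = gamma / c * (beta - c)) by (field; lra).
  nra.
Qed.

Section Better.

Variables (M : CompModel) (P : MaxProblem M).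

Definition better (x : Inst P) (s t : sol P) : sol P :=
  if Rle_dec (value P x s) (value P x t) then t else s.

Lemma ptime_better_of (X : Type) (f : X -> Inst P) (g h : X -> sol P) :
  ptime M X (Inst P) f -> ptime M X (sol P) g -> ptime M X (sol P) h ->
  ptime M X (sol P) (fun y => better (f y) (g y) (h y)).
Proof.
  intros Hf Hg Hh.
  exact (ptime_comp M _ _ _ _ _
           (ptime_pair M _ _ _ _ _ Hf (ptime_pair M _ _ _ _ _ Hg Hh))
           (ptime_better M P)).
Qed.

Lemma approx_le (a b : R) (x : Inst P) (s : sol P) :
  a <= b -> approx P b x s -> approx P a x s.
Proof.
  intros Hab [Hs Hv]; split; [exact Hs |].
  pose proof (opt_nonneg M P x); nra.
Qed.

Lemma approx_better_l (a : R) (x : Inst P) (s t : sol P) :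
  approx P a x s -> feasible P x t -> approx P a x (better x s t).
Proof.
  unfold better; intros [Hs Hv] Ht.
  destruct Rle_dec; split; [exact Ht | lra | exact Hs | exact Hv].
Qed.

Lemma approx_better_r (a : R) (x : Inst P) (s t : sol P) :
  feasible P x s -> approx P a x t -> approx P a x (better x s t).
Proof.
  unfold better; intros Hs [Ht Hv].
  destruct Rle_dec; split; [exact Ht | exact Hv | exact Hs | lra].
Qed.

Lemma appa_of_appa_gamma (alpha gamma c : R) (C : Inst P -> sol P)
    (A : Inst P -> Inst P) (B : Inst P -> sol P -> sol P) :
  alpha <= 1 -> 0 <= gamma -> 0 < c ->
  c_approx_alg P c C -> appa_gamma P alpha gamma A B ->
  appa P (alpha - gamma / c) A (fun x s => better x (B x s) (C x)).
Proof.
  intros Halpha Hgamma Hc [HCp HC] [HA [HB HAB]].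
  split; [exact HA | split].
  - apply ptime_better_of; [apply ptime_fst | exact HB |].
    exact (ptime_comp M _ _ _ _ _ (ptime_fst M _ _) HCp).
  - intros x beta s' Hbeta Hs'.
    pose proof (HAB x beta s' Hbeta Hs') as HBx.
    assert (HCx : approx P c x (C x)) by (apply HC; exists (B x s'); apply HBx).
    destruct (scaled_ratio_le_max alpha gamma c beta) as [Hle | Hle];
      try lra.
    + apply approx_better_r; [apply HBx |].
      exact (approx_le _ _ _ _ Hle HCx).
    + apply approx_better_l; [| apply HCx].
      exact (approx_le _ _ _ _ Hle HBx).
Qed.

End Better.

Theorem lemma2p1 (M : CompModel) (P : MaxProblem M) (e1 e2 c : R) :
  0 < e1 < 1 -> 0 < e2 < 1 -> 0 < c < 1 ->
  (exists C : Inst P -> sol P, c_approx_alg P c C) ->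
  forall (A : Inst P -> Inst P) (B : Inst P -> sol P -> sol P),
    appa_gamma P (1 - e1) e2 A B ->
    exists B' : Inst P -> sol P -> sol P, appa P (1 - e1 - e2 / c) A B'.
Proof.
  intros He1 He2 Hc [C HC] A B HAB.
  exists (fun x s => better M P x (B x s) (C x)).
  apply appa_of_appa_gamma; [lra | lra | lra | exact HC | exact HAB].
Qed.
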